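(* Let $\phi$ be an $n$-cube USO and let $\psi$ be a kaleidoscope for $\phi$. Let $F\subseteq[2n]$ and let $\psi'$ be the mirror image of $\psi$ along dimensions $F$. Then $\psi'$ contains $\phi$; that is, there exists $V\subseteq\{n+1,\dots,2n\}$ such that $\psi'(U)_L=\phi(U_L)$ for all $U$ with $V\subseteq U\subseteq V\cup[n]$.
   Context: For sets $U,V$ let $U\oplus V=(U\cup V)\setminus(U\cap V)$. An $m$-cube orientation on the vertex set of all subsets of $[m]$ has, for each vertex $V$ and $i\in[m]$, exactly one of the directed edges $V\to V\oplus\{i\}$, $V\oplus\{i\}\to V$; it is identified with its outmap $V\mapsto\{i: V\to V\oplus\{i\}\}$. It is a unique sink orientation (USO) if every face (subgraph induced by an interval $\{X: A\subseteq X\subseteq B\}$) has exactly one sink. For $V\subseteq[2n]$ write $V_L=V\cap[n]$ and $V_H=\{i-n: i\in V\cap\{n+1,\dots,2n\}\}$. A $2n$-cube USO $\psi$ is a kaleidoscope for the $n$-cube USO $\phi$ if $\psi(V)_L=\phi(V_L\oplus V_H)$ for all $V\subseteq[2n]$. For an $m$-cube USO $\psi$ and $F\subseteq[m]$, the mirror image of $\psi$ along dimensions $F$ is the USO $\psi'$ with $\psi'(V)=\psi(V\oplus F)$ for all $V\subseteq[m]$. *)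

(* Dimensions [m] = {1..m} are modelled by 'I_m = {0..m-1};
   [2n] is 'I_(n + n), with [n] the image of lshift and {n+1..2n} the image of rshift. *)
From mathcomp Require Import all_boot.
Set Implicit Arguments. Unset Strict Implicit. Unset Printing Implicit Defensive.

Definition setSD (T : finType) (U V : {set T}) : {set T} := (U :|: V) :\: (U :&: V).

(* An m-cube orientation, given by its outmap: for each vertex V and direction i,
   exactly one of V -> V(+){i}, V(+){i} -> V. *)
Definition is_orientation (m : nat) (psi : {set 'I_m} -> {set 'I_m}) : Prop :=
  forall (V : {set 'I_m}) (i : 'I_m),
    (i \in psi V) = (i \notin psi (setSD V [set i])).

Definition is_sink_of_face (m : nat) (psi : {set 'I_m} -> {set 'I_m})
    (A B X : {set 'I_m}) : Prop :=
  A \subset X /\ X \subset B /\ psi X :&: (B :\: A) = set0.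

Definition is_USO (m : nat) (psi : {set 'I_m} -> {set 'I_m}) : Prop :=
  is_orientation psi /\
  forall A B : {set 'I_m}, A \subset B ->
    exists X, is_sink_of_face psi A B X /\
      forall Y, is_sink_of_face psi A B Y -> Y = X.

Definition low (n : nat) (V : {set 'I_(n + n)}) : {set 'I_n} :=
  [set i : 'I_n | lshift n i \in V].
Definition high (n : nat) (V : {set 'I_(n + n)}) : {set 'I_n} :=
  [set i : 'I_n | rshift n i \in V].

Definition lowdims (n : nat) : {set 'I_(n + n)} := [set lshift n i | i : 'I_n].
Definition highdims (n : nat) : {set 'I_(n + n)} := [set rshift n i | i : 'I_n].

Definition is_kaleidoscope (n : nat) (phi : {set 'I_n} -> {set 'I_n})
    (psi : {set 'I_(n + n)} -> {set 'I_(n + n)}) : Prop :=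
  is_USO psi /\ forall V, low (psi V) = phi (setSD (low V) (high V)).

Definition mirror (m : nat) (psi : {set 'I_m} -> {set 'I_m}) (F : {set 'I_m}) :
    {set 'I_m} -> {set 'I_m} := fun V => psi (setSD V F).

From Pilot Require Import Defs.
From mathcomp Require Import all_boot.

(* Mirroring along F adds F to the argument, so by the kaleidoscope property
   psi'(U)_L = phi(U_L (+) U_H (+) F_L (+) F_H).  On the face
   {U | V <= U <= V u [n]} with V_H = F_L (+) F_H the coordinate U_H is
   constant and equal to F_L (+) F_H, so the last three summands cancel. *)

(* [Defs.setSD] is qualified because finset's lemma [setSD] shadows it. *)

Lemma in_setSD (T : finType) (A B : {set T}) (x : T) :
  (x \in Defs.setSD A B) = (x \in A) (+) (x \in B).
Proof. by rewrite !inE; case: (x \in A); case: (x \in B). Qed.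

Lemma setSDK (T : finType) (A B : {set T}) : Defs.setSD (Defs.setSD A B) B = A.
Proof. by apply/setP => x; rewrite !in_setSD addbK. Qed.

Lemma low_setSD (n : nat) (U V : {set 'I_(n + n)}) :
  low (Defs.setSD U V) = Defs.setSD (low U) (low V).
Proof. by apply/setP => i; rewrite !(in_setSD, inE). Qed.

Lemma high_setSD (n : nat) (U V : {set 'I_(n + n)}) :
  high (Defs.setSD U V) = Defs.setSD (high U) (high V).
Proof. by apply/setP => i; rewrite !(in_setSD, inE). Qed.

Lemma high_rshift_imset (n : nat) (A : {set 'I_n}) :
  high [set rshift n i | i in A] = A.
Proof. by apply/setP => i; rewrite inE mem_imset //; apply: rshift_inj. Qed.

Lemma high_face {n : nat} {V U : {set 'I_(n + n)}} :
  V \subset U -> U \subset V :|: lowdims n -> high U = high V.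
Proof.
move=> /subsetP sVU /subsetP sUV; apply/setP => i; rewrite !inE.
apply/idP/idP => [/sUV|/sVU //].
by rewrite inE => /orP[// | /imsetP[j _ /eqP]]; rewrite eq_rlshift.
Qed.

Lemma low_mirror_kaleidoscope {n : nat} {phi : {set 'I_n} -> {set 'I_n}}
    {psi : {set 'I_(n + n)} -> {set 'I_(n + n)}} (F U : {set 'I_(n + n)}) :
  is_kaleidoscope phi psi ->
  low (mirror psi F U) =
    phi (Defs.setSD (Defs.setSD (low U) (low F)) (Defs.setSD (high U) (high F))).
Proof. by case=> _ kal; rewrite /mirror kal low_setSD high_setSD. Qed.

Theorem lemma6p5 (n : nat) (phi : {set 'I_n} -> {set 'I_n})
    (psi : {set 'I_(n + n)} -> {set 'I_(n + n)}) (F : {set 'I_(n + n)}) :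
  is_USO phi -> is_kaleidoscope phi psi ->
  exists V : {set 'I_(n + n)}, V \subset highdims n /\
    forall U : {set 'I_(n + n)}, V \subset U -> U \subset V :|: lowdims n ->
      low (mirror psi F U) = phi (low U).
Proof.
move=> _ kal; exists [set rshift n i | i in Defs.setSD (low F) (high F)]; split.
  by apply: imsetS; apply/subsetP.
move=> U sVU sUV; rewrite (low_mirror_kaleidoscope F U kal) (high_face sVU sUV).
by rewrite high_rshift_imset setSDK setSDK.
Qed.
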